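(* Let $p,s,t$ be parameters with $p\neq0$, and let $a_n=a_n(p,s,t)$ be defined by $a_0=1$, $a_1=p$ and $a_n=s\,a_{n-1}+t\sum_{k=0}^{n-3}a_{k+1}a_{n-k-2}$ for $n\ge2$. Then the sequence $\left(\frac1p a_{n+1}\right)_{n\ge0}$ has generating function $\mathcal{J}(s,s,s,\ldots;pt,pt,pt,\ldots)$, and its Hankel transform is $\left((pt)^{\binom{n+1}{2}}\right)_{n\ge0}$.
   Context: $\mathcal{J}(\alpha_0,\alpha_1,\ldots;\beta_1,\beta_2,\ldots)$ denotes the power series given by the continued fraction $\cfrac{1}{1-\alpha_0x-\cfrac{\beta_1x^2}{1-\alpha_1x-\cfrac{\beta_2x^2}{1-\alpha_2x-\cdots}}}$. The Hankel transform of a sequence $(b_n)_{n\ge0}$ is the sequence $h_n=\det(b_{i+j})_{0\le i,j\le n}$, $n\ge0$. *)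

From mathcomp Require Import all_boot all_algebra.
Set Implicit Arguments. Unset Strict Implicit. Unset Printing Implicit Defensive.
Import GRing.Theory.
Local Open Scope ring_scope.

Definition fps (R : nzRingType) := nat -> R.

Definition smul (R : nzRingType) (f g : fps R) : fps R :=
  fun n => \sum_(i < n.+1) f i * g (n - i)%N.

Definition spow (R : nzRingType) (h : fps R) (k : nat) : fps R :=
  iter k (smul h) (fun n => (n == 0%N)%:R).

(* Inverse 1/(1 - h) of 1 - h, for a series h with h 0 = 0:
   sum_k h^k (only k <= n contributes to the n-th coefficient). *)
Definition sinv1m (R : nzRingType) (h : fps R) : fps R :=
  fun n => \sum_(k < n.+1) spow h k n.

(* Truncated J-fraction of depth k starting at level i:
   Jtrunc 0 i = 0,
   Jtrunc (k+1) i = 1 / (1 - alpha_i x - beta_{i+1} x^2 * Jtrunc k (i+1)). *)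
Fixpoint Jtrunc (R : nzRingType) (alpha beta : nat -> R) (k i : nat) : fps R :=
  match k with
  | 0 => fun _ => 0
  | k'.+1 =>
      sinv1m (fun n => alpha i * (n == 1%N)%:R
                     + (if (2 <= n)%N then beta i.+1 * Jtrunc alpha beta k' i.+1 (n - 2)%N
                        else 0))
  end.

(* The J-fraction J(alpha_0, alpha_1, ...; beta_1, beta_2, ...) as a formal
   power series: its n-th coefficient is that of any convergent of depth > n/2;
   we take depth n+1. *)
Definition Jfrac (R : nzRingType) (alpha beta : nat -> R) : fps R :=
  fun n => Jtrunc alpha beta n.+1 0 n.

Definition hankel (R : comNzRingType) (b : nat -> R) (n : nat) : R :=
  \det (\matrix_(i < n.+1, j < n.+1) b (i + j)%N).

From mathcomp Require Import all_boot all_algebra zify ring.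
Set Implicit Arguments. Unset Strict Implicit. Unset Printing Implicit Defensive.
Import GRing.Theory.
Local Open Scope ring_scope.

(* With b_n = a_(n+1) / p the recurrence reads b = 1 + s x b + (pt) x^2 b^2,
   the fixed-point equation of the constant J-fraction J(s, s, ...; pt, pt, ...).
   For the Hankel determinants, the Stieltjes table c_k = x^k b^(k+1) satisfies
   c_k(n+1) = c_(k-1)(n) + s c_k(n) + pt c_(k+1)(n); the tridiagonal operator on
   the right is symmetric for the weights (pt)^k, so sum_k c_k(i) c_k(j) (pt)^k
   depends only on i + j and equals b_(i+j).  The Hankel matrix thus factors as
   L diag((pt)^k) L^T with L unitriangular. *)

Lemma sumr_ord_widen (V : nmodType) (F : nat -> V) m n : (m <= n)%N ->
  (forall k, (m <= k < n)%N -> F k = 0) ->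
  \sum_(k < m) F k = \sum_(k < n) F k.
Proof.
move=> le_mn F0; rewrite -!(big_mkord xpredT).
rewrite (@big_cat_nat _ _ _ m 0 n _ _ (leq0n m) le_mn) /= [X in _ = _ + X]big1_seq ?addr0 //.
by move=> k /andP[_]; rewrite mem_index_iota; apply: F0.
Qed.

Lemma coefM_eq_le (R : nzRingType) (A A' B B' : {poly R}) m :
  (forall i, (i <= m)%N -> A`_i = A'`_i) -> (forall i, (i <= m)%N -> B`_i = B'`_i) ->
  (A * B)`_m = (A' * B')`_m.
Proof.
move=> eqA eqB; rewrite !coefM; apply: eq_bigr => -[i lt_im] _ /=.
by rewrite eqA ?eqB //; lia.
Qed.

Section FormalPowerSeries.
Variable R : nzRingType.
Implicit Types f g h : fps R.

Definition sshift f : fps R := fun n => if n is n'.+1 then f n' else 0.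

Lemma smul_poly N f g m : (m < N)%N ->
  smul f g m = (\poly_(i < N) f i * \poly_(i < N) g i)`_m.
Proof.
move=> lt_mN; rewrite coefM; apply: eq_bigr => -[i lt_im] _ /=.
by rewrite !coef_poly ifT ?ifT //; lia.
Qed.

Lemma smulA f g h n : smul (smul f g) h n = smul f (smul g h) n.
Proof.
have P_smul f1 f2 i : (i <= n)%N -> (\poly_(j < n.+1) smul f1 f2 j)`_i =
    (\poly_(j < n.+1) f1 j * \poly_(j < n.+1) f2 j)`_i.
  by move=> le_in; rewrite coef_poly ltnS le_in (@smul_poly n.+1).
rewrite !(smul_poly _ _ (ltnSn n)).
rewrite (coefM_eq_le (P_smul f g) (fun _ _ => erefl)).
by rewrite [RHS](coefM_eq_le (fun _ _ => erefl) (P_smul g h)) mulrA.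
Qed.

Lemma smul_shiftl f g n : smul (sshift f) g n = sshift (smul f g) n.
Proof.
case: n => [|n]; rewrite /smul big_ord_recl /= mul0r ?add0r //.
by rewrite big_ord0.
Qed.

Lemma smul_shiftr f g n : smul f (sshift g) n = sshift (smul f g) n.
Proof.
case: n => [|n]; rewrite /smul big_ord_recr /= ?subnn mulr0 addr0 ?big_ord0 //.
by apply: eq_bigr => -[i lt_in] _ /=; rewrite subSn.
Qed.

Lemma spow_eq0 h k n : h 0%N = 0 -> (n < k)%N -> spow h k n = 0.
Proof.
move=> h0; elim: k n => [//|k IHk] n lt_nk /=.
rewrite /smul big1 // => -[[|i] lt_in] _; first by rewrite h0 mul0r.
by rewrite IHk ?mulr0 //=; lia.
Qed.

Lemma sinv1mE h n : h 0%N = 0 ->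
  sinv1m h n = (n == 0%N)%:R + smul h (sinv1m h) n.
Proof.
move=> h0; rewrite /sinv1m big_ord_recl; congr (_ + _).
rewrite /smul (eq_bigr (fun k : 'I_n => smul h (spow h k) n)) //.
rewrite /smul exchange_big /=; apply: eq_bigr => -[[|i] lt_in] _ /=.
  by rewrite h0 mul0r big1 // => k _; rewrite mul0r.
rewrite -mulr_sumr /sinv1m; congr (_ * _).
symmetry; apply: (@sumr_ord_widen _ (fun k => spow h k (n - i.+1)%N) (n - i.+1).+1 n); first lia.
by move=> k /andP[le_k _]; apply: spow_eq0 => //; lia.
Qed.

(* Uniqueness of the solution of f = 1 + h f, up to degree N: the n-th
   coefficient of sinv1m h only involves h 0, ..., h n. *)
Lemma sinv1m_eq_le h h' f N : h 0%N = 0 ->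
  (forall j, (j <= N)%N -> h j = h' j) ->
  (forall n, f n = (n == 0%N)%:R + smul h' f n) ->
  forall n, (n <= N)%N -> sinv1m h n = f n.
Proof.
move=> h0 eq_h f_fix; elim/ltn_ind=> n IHn le_nN.
rewrite sinv1mE // f_fix; congr (_ + _); apply: eq_bigr => -[[|j] lt_jn] _ /=.
  by rewrite -eq_h // h0 !mul0r.
by rewrite eq_h ?IHn //; lia.
Qed.

End FormalPowerSeries.

Lemma prodrX_ord (R : comNzRingType) (x : R) n :
  \prod_(i < n) x ^+ i = x ^+ 'C(n, 2).
Proof. by rewrite prodrXr -bin2_sum big_mkord. Qed.

Section QuadraticRecurrence.
Variables (R : comNzRingType) (s be : R) (b : fps R).
Hypothesis b0 : b 0%N = 1.
Hypothesis bS : forall n, b n.+1 = s * b n + be * sshift (smul b b) n.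

Definition jstep : fps R :=
  fun j => s * (j == 1%N)%:R + (if (2 <= j)%N then be * b (j - 2)%N else 0).

Lemma b_fixpoint n : b n = (n == 0%N)%:R + smul jstep b n.
Proof.
case: n => [|n]; first by rewrite /smul big_ord1 /jstep /= b0 mulr0 addr0 mul0r addr0.
rewrite /smul big_ord_recl /jstep /= mulr0 addr0 mul0r !add0r bS.
case: n => [|n]; first by rewrite big_ord1 /= mulr1 addr0 /sshift mulr0 addr0.
rewrite big_ord_recl /= mulr1 addr0 /= mulr_sumr; congr (_ + _).
by apply: eq_bigr => i _ /=; rewrite /bump !add1n subSS subSS subn0 mulr0 add0r mulrA.
Qed.

Lemma Jtrunc_const k i n : (n < k)%N -> Jtrunc (fun _ => s) (fun _ => be) k i n = b n.
Proof.
elim: k i n => [//|k IHk] i n lt_nk /=.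
apply: (sinv1m_eq_le (h' := jstep) (N := k)) => [|j le_jk|m|//].
- by rewrite mulr0 addr0.
- by rewrite /jstep; case: ifP => // le2j; rewrite IHk //; lia.
- exact: b_fixpoint.
Qed.

Lemma Jfrac_const n : Jfrac (fun _ => s) (fun _ => be) n = b n.
Proof. exact: Jtrunc_const. Qed.

Fixpoint stieltjes k : fps R :=
  if k is k'.+1 then sshift (smul (stieltjes k') b) else b.

Definition jacobi (f : fps R) k : R := sshift f k + s * f k + be * f k.+1.

Lemma smul_bS f m :
  smul f b m.+1 = f m.+1 + s * smul f b m + be * smul f (stieltjes 1) m.
Proof.
rewrite {1}/smul big_ord_recr /= subnn b0 mulr1 addrC -addrA; congr (_ + _).
rewrite [smul f b m]/smul [smul f _ m]/smul !mulr_sumr -big_split /=.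
by apply: eq_bigr => -[i le_im] _ /=; rewrite subSn // (bS (m - i)); ring.
Qed.

Lemma stieltjes_rec k n : stieltjes k n.+1 = jacobi (stieltjes ^~ n) k.
Proof.
case: k => [|k]; first by rewrite /jacobi /= add0r; apply: bS.
case: n => [|m]; first by rewrite /jacobi /= /smul !big_ord1 b0 mulr1 !mulr0 !addr0.
rewrite /jacobi; have -> : stieltjes k.+2 m.+1 = smul (stieltjes k) (stieltjes 1) m.
  by rewrite /= smul_shiftl smul_shiftr; case: m => //= m; rewrite smulA.
exact: smul_bS.
Qed.

Lemma stieltjes_eq0 k n : (n < k)%N -> stieltjes k n = 0.
Proof.
elim: k n => [//|k IHk] [|n] //= lt_nk.
by rewrite /smul big1 // => -[i le_in] _ /=; rewrite IHk ?mul0r //; lia.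
Qed.

Lemma stieltjes_diag k : stieltjes k k = 1.
Proof.
elim: k => [//|k IHk] /=.
rewrite /smul big_ord_recr /= subnn b0 mulr1 IHk big1 ?add0r // => -[i lt_ik] _ /=.
by rewrite stieltjes_eq0 ?mul0r.
Qed.

(* The two sides differ by a telescoping sum. *)
Lemma jacobi_sym f g m : f m.+1 = 0 -> g m.+1 = 0 ->
  \sum_(k < m.+1) jacobi f k * g k * be ^+ k =
  \sum_(k < m.+1) f k * jacobi g k * be ^+ k.
Proof.
move=> fm gm; apply/eqP; rewrite -subr_eq0 -sumrB; apply/eqP.
pose W k := (f k * g k.-1 - f k.-1 * g k) * be ^+ k.
rewrite (eq_bigr (fun k : 'I_m.+1 => W k.+1 - W k)) => [|i _]; last first.
  by rewrite /W /jacobi; case: (nat_of_ord i) => [|k] /=; rewrite ?exprS; ring.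
have := telescope_sumr W (leq0n m.+1); rewrite big_mkord => ->.
by rewrite /W /= fm gm; ring.
Qed.

Definition gram m i j : R := \sum_(k < m.+1) stieltjes k i * stieltjes k j * be ^+ k.

Lemma gramS m i j : (i <= m)%N -> (j <= m)%N -> gram m i.+1 j = gram m i j.+1.
Proof.
move=> le_im le_jm; rewrite /gram.
under eq_bigr do rewrite stieltjes_rec.
under [RHS]eq_bigr do rewrite stieltjes_rec.
by apply: jacobi_sym; apply: stieltjes_eq0.
Qed.

Lemma gram_moment m i j : (i + j <= m)%N -> gram m i j = b (i + j)%N.
Proof.
elim: i j => [|i IHi] j le_ijm.
  rewrite /gram big_ord_recl /= b0 mul1r mulr1 big1 ?addr0 // => k _.
  by rewrite /= !mul0r.
by rewrite gramS ?IHi ?addSnnS //; lia.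
Qed.

Lemma hankel_stieltjes n : hankel b n = be ^+ 'C(n.+1, 2).
Proof.
pose L := \matrix_(i < n.+1, k < n.+1) stieltjes k i.
pose D := diag_mx (\row_(k < n.+1) be ^+ k).
have hankel_LDLt : \matrix_(i < n.+1, j < n.+1) b (i + j)%N = L *m D *m L^T.
  apply/matrixP => i j; rewrite !mxE mul_mx_diag.
  have [lt_in lt_jn] := (ltn_ord i, ltn_ord j).
  rewrite -(@gram_moment (n + n)); last lia.
  rewrite /gram -(@sumr_ord_widen _ (fun k => stieltjes k i * stieltjes k j * be ^+ k) n.+1).
  - by apply: eq_bigr => k _; rewrite !mxE mulrAC.
  - lia.
  - by move=> k /andP[le_nk _]; rewrite (@stieltjes_eq0 k i) ?mul0r //; lia.
have L_trig : is_trig_mx L by apply/is_trig_mxP => i j lt_ij; rewrite mxE stieltjes_eq0.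
rewrite /hankel hankel_LDLt !det_mulmx det_tr det_diag det_trig //.
rewrite big1 ?mul1r ?mulr1 => [|i _]; last by rewrite mxE stieltjes_diag.
by rewrite -prodrX_ord; apply: eq_bigr => i _; rewrite mxE.
Qed.

End QuadraticRecurrence.

Theorem mainTheorem5 (R : fieldType) (p s t : R) (a : nat -> R) :
  p != 0 ->
  a 0%N = 1 ->
  a 1%N = p ->
  (forall n : nat, (2 <= n)%N ->
     a n = s * a n.-1 + t * \sum_(0 <= k < n - 2) a k.+1 * a (n - k - 2)%N) ->
  (forall n : nat, p^-1 * a n.+1 = Jfrac (fun _ => s) (fun _ => p * t) n) /\
  (forall n : nat, hankel (fun m => p^-1 * a m.+1) n = (p * t) ^+ 'C(n.+1, 2)).
Proof.
move=> p_neq0 _ a1 a_rec; set b := fun m => p^-1 * a m.+1.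
have b0 : b 0%N = 1 by rewrite /b a1 mulVf.
have bS n : b n.+1 = s * b n + p * t * sshift (smul b b) n.
  rewrite /b (a_rec n.+2) // mulrDr mulrCA; congr (_ + _).
  case: n => [|m]; first by rewrite big_geq // !mulr0.
  rewrite big_mkord /= /smul !mulr_sumr; apply: eq_bigr => -[k lt_km] _ /=.
  have -> : (m.+3 - k - 2)%N = (m - k).+1 by lia.
  by field.
split=> n; first by rewrite (Jfrac_const b0 bS).
exact: hankel_stieltjes b0 bS n.
Qed.
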